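(* Let $G$ be a finite undirected graph and $\tau\ge1$ an integer. Run the following procedure. Maintain a current graph $H$, initially $H=G$, and a stored value $s(e)$ for each edge, initially $s(e)=\mathrm{sup}_\tau(e,G)$ for every $e\in E(G)$. While $H$ has at least one edge: set $k:=\min_{e\in E(H)} s(e)+2$; then, while there exists an edge $e=(u,v)\in E(H)$ with $s(e)\le k-2$, pick any such edge, assign $\phi(e):=k$, let $H_{\mathrm{old}}:=H$, delete the edge $e$ from $H$, and for every edge $e'=(u',v')\in E(H)$ with $u',v'\in\{u\}\cup\{v\}\cup\Delta_\tau(e,H_{\mathrm{old}})$ and $s(e')>k-2$, reset $s(e'):=\mathrm{sup}_\tau(e',H)$. Then, when the procedure terminates, every edge $e\in E(G)$ has been assigned exactly once and $\phi(e)=\phi_\tau(e,G)$, regardless of the choices made.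
   Context: Graphs are finite, simple, undirected and unweighted; paths may repeat vertices and their length is the number of edges. For vertices $v,u$ of a graph $H$, $u$ is $\tau$-hop reachable from $v$ in $H$ if there is a path between them in $H$ of length at most $\tau$. $N_\tau(v,H)$ is the set of vertices $u\ne v$ that are $\tau$-hop reachable from $v$ in $H$. For an edge $e=(u,v)$ of $H$, $\Delta_\tau(e,H)=N_\tau(u,H)\cap N_\tau(v,H)$ and $\mathrm{sup}_\tau(e,H)=|\Delta_\tau(e,H)|$. The $(k,\tau)$-truss of $G$ is the maximal subgraph $G'$ of $G$ such that $\mathrm{sup}_\tau(e,G')\ge k-2$ for every edge $e\in E(G')$ (supports computed inside $G'$) and no more edges of $G$ can be added while keeping this property; a subgraph is determined by its edge set. The higher-order truss number $\phi_\tau(e,G)$ of an edge $e$ is the maximum $k$ such that $e$ belongs to the $(k,\tau)$-truss of $G$. *)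

(* A graph on a finite vertex type T is given by its edge set
   E : {set {set T}}, each edge being a 2-element set of vertices; a subgraph
   is determined by its edge set F \subset E. *)
From mathcomp Require Import all_boot.
Set Implicit Arguments.
Unset Strict Implicit.
Unset Printing Implicit Defensive.

Section HigherOrderTruss.
Variable T : finType.

Definition adj (E : {set {set T}}) : rel T := fun x y => [set x; y] \in E.

Definition reachb (E : {set {set T}}) (tau : nat) (v u : T) : bool :=
  [exists n : 'I_tau.+1, exists p : n.-tuple T,
     path (adj E) v p && (last v p == u)].

Definition Nt (tau : nat) (E : {set {set T}}) (v : T) : {set T} :=
  [set u | (u != v) && reachb E tau v u].

(* Delta_tau(e, H) = N_tau(u,H) :&: N_tau(v,H) for e = {u, v} *)
Definition Delta (tau : nat) (E : {set {set T}}) (e : {set T}) : {set T} :=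
  [set w | [forall x in e, w \in Nt tau E x]].

Definition sup (tau : nat) (E : {set {set T}}) (e : {set T}) : nat :=
  #|Delta tau E e|.

Definition truss_valid (tau k : nat) (F : {set {set T}}) : Prop :=
  forall e, e \in F -> k - 2 <= sup tau F e.

Definition is_truss (tau k : nat) (E F : {set {set T}}) : Prop :=
  [/\ F \subset E, truss_valid tau k F &
      forall F' : {set {set T}}, F \subset F' -> F' \subset E -> truss_valid tau k F' -> F' = F].

Definition in_truss (tau k : nat) (E : {set {set T}}) (e : {set T}) : Prop :=
  exists F, is_truss tau k E F /\ e \in F.

Definition is_truss_number (tau : nat) (E : {set {set T}}) (e : {set T})
    (k : nat) : Prop :=
  in_truss tau k E e /\ forall k', in_truss tau k' E e -> k' <= k.

(* State of the procedure: current graph H, stored values s, the log of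
   assignments phi(e) := k (in order), and the phase: None = at the test of
   the outer while loop, Some k = inside the inner loop with current k. *)
Record state := State {
  st_H : {set {set T}};
  st_s : {set T} -> nat;
  st_log : seq ({set T} * nat);
  st_k : option nat }.

(* the reset of stored values after deleting e from H (H is H_old) *)
Definition reset (tau k : nat) (e : {set T}) (H : {set {set T}})
    (s : {set T} -> nat) : {set T} -> nat :=
  fun e' => if [&& e' \in H :\ e, e' \subset e :|: Delta tau H e & k - 2 < s e']
            then sup tau (H :\ e) e' else s e'.

Inductive step (tau : nat) : state -> state -> Prop :=
| step_outer (H : {set {set T}}) (s : {set T} -> nat) log m :
    H != set0 ->
    (exists2 e, e \in H & s e = m) ->
    (forall e, e \in H -> m <= s e) ->
    step tau (State H s log None) (State H s log (Some (m + 2)))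
| step_pick (H : {set {set T}}) (s : {set T} -> nat) log k (e : {set T}) :
    e \in H -> s e <= k - 2 ->
    step tau (State H s log (Some k))
             (State (H :\ e) (reset tau k e H s) (rcons log (e, k)) (Some k))
| step_exit (H : {set {set T}}) (s : {set T} -> nat) log k :
    (forall e, e \in H -> k - 2 < s e) ->
    step tau (State H s log (Some k)) (State H s log None).

Inductive steps (tau : nat) : state -> state -> Prop :=
| steps_refl st : steps tau st st
| steps_cons st1 st2 st3 : step tau st1 st2 -> steps tau st2 st3 -> steps tau st1 st3.

End HigherOrderTruss.

From mathcomp Require Import all_boot zify.

(* Stored values always bound supports from above, and are exact for the edges whose
   value exceeds the current threshold k - 2.  Deleting e changes sup_tau(f) only if
   some tau-walk from an endpoint of f to a witness must pass through e; then both
   endpoints of f are within tau hops of both endpoints of e, i.e. in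
   e :|: Delta tau H e, which is exactly where values are recomputed.
   When a phase with threshold k starts, every edge of H has support >= k - 2, so H
   lies in the (k,tau)-truss: this is the lower bound for the edges deleted in the
   phase.  Conversely a subgraph F valid at a level k' > k contains no edge deleted
   before (their truss numbers are at most k), so F is inside H and
   sup(e, F) <= sup(e, H) <= s(e) <= k - 2 < k' - 2: e lies in no (k',tau)-truss. *)

Set Implicit Arguments.
Unset Strict Implicit.
Unset Printing Implicit Defensive.

Section Reach.
Variable T : finType.
Implicit Types (E H : {set {set T}}) (e f : {set T}) (x y z w a b : T).

Definition reach E n x y :=
  exists p : seq T, [/\ size p <= n, path (adj E) x p & last x p = y].

Lemma reachbP E n x y : reflect (reach E n x y) (reachb E n x y).
Proof.
apply: (iffP existsP) => [[m /existsP [p /andP [pP /eqP pL]]] | [p [pS pP pL]]].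
  by exists p; split; rewrite // size_tuple -ltnS.
exists (Ordinal (pS : size p < n.+1)); apply/existsP; exists (in_tuple p).
by rewrite /= pP pL eqxx.
Qed.

Lemma adjC E x y : adj E x y = adj E y x.
Proof. by rewrite /adj setUC. Qed.

Lemma reach_refl E n x : reach E n x x.
Proof. by exists [::]. Qed.

Lemma reach0 E x y : reach E 0 x y -> x = y.
Proof. by case=> [[|a p]] [] //= _ _ ->. Qed.

Lemma reach_le E n m x y : n <= m -> reach E n x y -> reach E m x y.
Proof. by move=> le_nm [p [pS pP pL]]; exists p; split=> //; apply: leq_trans le_nm. Qed.

Lemma reach_cat E n1 n2 x y z :
  reach E n1 x y -> reach E n2 y z -> reach E (n1 + n2) x z.
Proof.
move=> [p [pS pP pL]] [q [qS qP qL]]; exists (p ++ q); split.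
- by rewrite size_cat leq_add.
- by rewrite cat_path pP pL qP.
- by rewrite last_cat pL.
Qed.

Lemma reach_adj E x y : adj E x y -> reach E 1 x y.
Proof. by move=> xy; exists [:: y]; rewrite /= xy. Qed.

Lemma reach_sym E n x y : reach E n x y -> reach E n y x.
Proof.
case=> p [pS pP pL]; exists (rev (belast x p)); split.
- by rewrite size_rev size_belast.
- by rewrite -pL rev_path; apply: sub_path pP => a b /=; rewrite adjC.
- by case: p {pS pP} pL => [|a p] //= <-; rewrite rev_cons last_rcons.
Qed.

Lemma reach_subset E1 E2 n x y : E1 \subset E2 -> reach E1 n x y -> reach E2 n x y.
Proof.
move=> sE [p [pS pP pL]]; exists p; split=> //.
by apply: sub_path pP => a b /(subsetP sE).
Qed.

Lemma reach_setD1 H e n x w :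
  reach H n x w -> ~ reach (H :\ e) n x w ->
  exists a b n1 n2, [/\ n1 + n2 < n, reach H n1 x a, e = [set a; b],
                       adj H a b & reach H n2 b w].
Proof.
case=> p [pS pP pL]; elim: p n x pS pP pL => [|y p IHp] n x pS pP pL lost.
  by case: lost; rewrite -pL; apply: reach_refl.
move: pP => /= /andP [xy pP].
have [exy | nexy] := eqVneq e [set x; y].
  by exists x, y, 0, (size p); split=> //; [apply: reach_refl | exists p].
case: n pS lost => [//|n] /= pS lost.
have lost' : ~ reach (H :\ e) n y w.
  move=> yw; apply: lost; apply: (reach_cat (n1 := 1)) yw.
  by apply: reach_adj; rewrite /adj in_setD1 eq_sym nexy.
have [a [b [n1 [n2 [lt_n xa eab ab bw]]]]] := IHp n y pS pP pL lost'.
exists a, b, n1.+1, n2; split=> //.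
by apply: (reach_cat (n1 := 1)) xa; apply: reach_adj.
Qed.

Lemma subset_Delta tau E1 E2 e :
  E1 \subset E2 -> Delta tau E1 e \subset Delta tau E2 e.
Proof.
move=> sE; apply/subsetP=> w; rewrite !inE => /forall_inP we.
apply/forall_inP=> x /we; rewrite !inE => /andP [-> /reachbP xw].
by apply/reachbP; apply: reach_subset xw.
Qed.

Lemma subset_leq_sup tau E1 E2 e : E1 \subset E2 -> sup tau E1 e <= sup tau E2 e.
Proof. by move=> sE; apply/subset_leq_card/subset_Delta. Qed.

Lemma in_Delta2 tau E x y w :
  (w \in Delta tau E [set x; y]) = (w \in Nt tau E x) && (w \in Nt tau E y).
Proof.
rewrite inE; apply/forall_inP/andP => [wxy | [wx wy] z /set2P [] ->] //.
by rewrite !wxy ?set21 ?set22.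
Qed.

Lemma reach_mem_Delta tau H a b z :
  reach H tau a z -> reach H tau b z -> z \in [set a; b] :|: Delta tau H [set a; b].
Proof.
move=> az bz; rewrite in_setU in_Delta2 !inE !(eq_sym z).
by case: eqP => //= _; case: eqP => //= _; apply/andP; split; apply/reachbP.
Qed.

Lemma edge_sub_region tau H e z z' w :
  adj H z z' -> reach H tau z w -> reach H tau z' w -> ~ reach (H :\ e) tau z w ->
  [set z; z'] \subset e :|: Delta tau H e.
Proof.
move=> zz' zw z'w lost.
have [a [b [n1 [n2 [lt_tau za eab ab bw]]]]] := reach_setD1 zw lost.
have z'a : reach H (1 + n1) z' a by apply: reach_cat za; apply: reach_adj; rewrite adjC.
have zb : reach H (n1 + 1) z b by apply: reach_cat za _; apply: reach_adj.
rewrite eab; apply/subsetP => t /set2P [] ->; apply: reach_mem_Delta; apply: reach_sym.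
- by apply: reach_le za; lia.
- by apply: reach_le zb; lia.
- by apply: reach_le z'a; lia.
case: n2 lt_tau bw => [|n2] lt_tau bw; first by rewrite (reach0 bw).
by apply: reach_le (reach_cat z'a (reach_adj ab)); lia.
Qed.

Lemma sup_setD1_outside tau H e f :
  f \in H -> #|f| = 2 -> ~~ (f \subset e :|: Delta tau H e) ->
  sup tau (H :\ e) f = sup tau H f.
Proof.
move=> fH /eqP /cards2P [x [y [_ fxy]]] far; subst f.
apply/eqP; rewrite eqn_leq subset_leq_sup ?subsetDl //=.
apply/subset_leq_card/subsetP => w; rewrite !in_Delta2 => /andP [wx wy].
apply: contraNT far; rewrite negb_and => lost.
wlog lost_x : x y fH wx wy {lost} / w \notin Nt tau (H :\ e) x.
  move=> sym; case/orP: lost => lost; first exact: sym fH wx wy lost.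
  by rewrite setUC; apply: (sym y x) => //; rewrite setUC.
move: wx lost_x; rewrite !inE => /andP [-> /reachbP xw] /reachbP lost.
move: wy; rewrite inE => /andP [_ /reachbP yw].
exact: edge_sub_region fH xw yw lost.
Qed.

End Reach.

Section Truss.
Variables (T : finType) (tau k : nat).
Implicit Types (E F : {set {set T}}).

Definition truss_validb F := [forall e in F, k - 2 <= sup tau F e].

Lemma truss_validP F : reflect (truss_valid tau k F) (truss_validb F).
Proof. exact: forall_inP. Qed.

Lemma truss_valid_extend E F :
  F \subset E -> truss_valid tau k F -> exists2 F', is_truss tau k E F' & F \subset F'.
Proof.
move=> FE /truss_validP Fv.
have /maxset_exists [F' /maxsetP [/andP [F'E /truss_validP F'v] F'max] FF'] :
  [pred G : {set {set T}} | (G \subset E) && truss_validb G] F by rewrite /= FE.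
exists F' => //; split=> // G F'G GE /truss_validP Gv.
by apply: F'max; rewrite //= GE Gv.
Qed.

End Truss.

Section Procedure.
Variables (T : finType) (tau : nat) (E : {set {set T}}).
Hypothesis edgeE : forall e, e \in E -> #|e| = 2.
Implicit Types (H F : {set {set T}}) (s : {set T} -> nat) (log : seq ({set T} * nat)).

Definition truss_bound (e : {set T}) (k : nat) :=
  forall k' F, F \subset E -> truss_valid tau k' F -> e \in F -> k' <= k.

Definition phase_inv H s log (phase : option nat) :=
  match phase with
  | None => (forall f, f \in H -> s f = sup tau H f) /\
            (forall p g, p \in log -> g \in H -> p.2 <= (s g).+1)
  | Some k => [/\ 2 <= k, forall f, f \in H -> k - 2 < s f -> s f = sup tau H f,
                  forall p, p \in log -> p.2 <= k &
                  exists2 F, is_truss tau k E F & H \subset F]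
  end.

Record proc_inv (st : state T) : Prop := ProcInv {
  inv_subset : st_H st \subset E;
  inv_count : forall e, e \in E ->
    count (fun p => p.1 == e) (st_log st) = (e \notin st_H st);
  inv_sup_le : forall f, f \in st_H st -> sup tau (st_H st) f <= st_s st f;
  inv_log : forall p, p \in st_log st -> in_truss tau p.2 E p.1 /\ truss_bound p.1 p.2;
  inv_phase : phase_inv (st_H st) (st_s st) (st_log st) (st_k st) }.

Lemma proc_inv_init : proc_inv (State E (sup tau E) [::] None).
Proof. by split=> //= e ->. Qed.

Lemma proc_inv_outer H s log m :
  (exists2 e, e \in H & s e = m) -> (forall e, e \in H -> m <= s e) ->
  proc_inv (State H s log None) -> proc_inv (State H s log (Some (m + 2))).
Proof.
move=> [e0 e0H <-] s_min [/= HE Hcount Hsup Hlog [s_exact log_le]].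
have Hv : truss_valid tau (s e0 + 2) H.
  by move=> f fH; rewrite -s_exact // addnK s_min.
have [F HF HF'] := truss_valid_extend HE Hv.
split=> //=; split=> [| f fH _ | p /log_le /(_ e0H) | ].
- by rewrite addn2.
- exact: s_exact fH.
- by rewrite addn2 => /leqW.
- by exists F.
Qed.

Lemma proc_inv_exit H s log k :
  (forall e, e \in H -> k - 2 < s e) ->
  proc_inv (State H s log (Some k)) -> proc_inv (State H s log None).
Proof.
move=> s_big [/= HE Hcount Hsup Hlog [k2 s_exact log_le _]].
split=> //=; split=> [f fH | p g /log_le pk gH]; first by apply: s_exact (s_big f fH).
by have := s_big g gH; lia.
Qed.

Lemma truss_valid_sub_current H s log k k' F :
  proc_inv (State H s log (Some k)) ->
  F \subset E -> truss_valid tau k' F -> k < k' -> F \subset H.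
Proof.
move=> [/= _ Hcount _ Hlog [_ _ log_le _]] FE Fv lt_kk'.
apply/subsetP => f fF; apply: contraTT lt_kk' => fNH.
have : has (fun p => p.1 == f) log by rewrite has_count Hcount ?(subsetP FE) ?fNH.
case/hasP => p /[dup] /log_le pk /Hlog [_ bound] /eqP pf.
by rewrite -leqNgt (leq_trans _ pk) // (bound k' F) // pf.
Qed.

Lemma reset_exact H s log k e f :
  proc_inv (State H s log (Some k)) -> f \in H :\ e ->
  k - 2 < reset tau k e H s f -> reset tau k e H s f = sup tau (H :\ e) f.
Proof.
move=> [/= HE _ _ _ [_ s_exact _ _]] fHe; have /setD1P [_ fH] := fHe.
rewrite /reset; case: ifP => // near lt_s.
rewrite s_exact ?sup_setD1_outside ?edgeE ?(subsetP HE) //.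
by apply: contraFN near => fnear; rewrite fHe fnear lt_s.
Qed.

Lemma proc_inv_pick H s log k e :
  e \in H -> s e <= k - 2 -> proc_inv (State H s log (Some k)) ->
  proc_inv (State (H :\ e) (reset tau k e H s) (rcons log (e, k)) (Some k)).
Proof.
move=> eH se inv; have [/= HE Hcount Hsup Hlog [k2 _ log_le [F HF HF']]] := inv.
have HeH : H :\ e \subset H by apply: subsetDl.
split=> /=.
- exact: subset_trans HE.
- move=> f fE; rewrite -cats1 count_cat Hcount // in_setD1 /=.
  by case: (eqVneq f e) => [->|] /=; rewrite ?eH ?addn0.
- move=> f fHe; have /setD1P [_ fH] := fHe.
  rewrite /reset; case: ifP => // _.
  exact: leq_trans (subset_leq_sup tau f HeH) (Hsup f fH).
- move=> p; rewrite mem_rcons inE => /predU1P [-> /= | /Hlog //]; split.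
    by exists F; split => //; apply: (subsetP HF').
  move=> k' F' F'E F'v eF'; rewrite leqNgt; apply/negP => lt_kk'.
  have F'H := truss_valid_sub_current inv F'E F'v lt_kk'.
  have := F'v e eF'; have := subset_leq_sup tau e F'H; have := Hsup e eH; lia.
- split=> //; first by move=> f; apply: reset_exact inv.
    by move=> p; rewrite mem_rcons inE => /predU1P [-> | /log_le].
  by exists F => //; apply: subset_trans HF'.
Qed.

Lemma proc_inv_step st st' : step tau st st' -> proc_inv st -> proc_inv st'.
Proof.
case=> [H s log m _ | H s log k e | H s log k].
- exact: proc_inv_outer.
- exact: proc_inv_pick.
- exact: proc_inv_exit.
Qed.

Lemma proc_inv_steps st st' : steps tau st st' -> proc_inv st -> proc_inv st'.
Proof. by elim=> // st1 st2 st3 /proc_inv_step step12 _ IH /step12. Qed.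

End Procedure.

Theorem theorem1 (T : finType) (E : {set {set T}}) (tau : nat) :
  (forall e, e \in E -> #|e| = 2) -> 1 <= tau ->
  forall (s : {set T} -> nat) (log : seq ({set T} * nat)),
    steps tau (State E (sup tau E) [::] None) (State set0 s log None) ->
    forall e, e \in E ->
      count (fun p => p.1 == e) log = 1 /\
      (forall k, (e, k) \in log -> is_truss_number tau E e k).
Proof.
move=> edgeE _ s log run e eE.
have [_ Hcount _ Hlog _] := proc_inv_steps edgeE run (proc_inv_init tau E).
split; first by rewrite Hcount // inE.
move=> k /Hlog [e_in bound]; split=> // k' [F [[FE Fv _] eF]].
exact: bound FE Fv eF.
Qed.
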